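(* Let $\xi_m>0$ and $0<\mu\le\xi_m$, and define for $\tau>0$ $$f(\mu,\tau)=2\tau\ln\frac{\cosh(\xi_m/2\tau)}{\cosh(\mu/2\tau)}+\mu\int_0^{\mu}\tanh\Big(\frac{\xi}{2\tau}\Big)\frac{d\xi}{\xi}.$$ Then $\partial f/\partial\tau<0$, $\partial f/\partial\mu>0$, $\lim_{\tau\to0^+}f(\mu,\tau)=\infty$ and $\lim_{\tau\to\infty}f(\mu,\tau)=0$. Consequently, for every $\lambda>0$ the equation $\xi_m/\lambda=f(\mu,\tau)$ has a unique positive solution $\tau=T_c(\mu,\lambda)$. *)

From Stdlib Require Import Reals Lra ClassicalEpsilon.
Open Scope R_scope.

(* Total Riemann integral: RiemannInt of any integrability witness if one
   exists (the value is witness-independent, RiemannInt_P5), 0 otherwise. *)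
Definition Rint (g : R -> R) (a b : R) : R :=
  match excluded_middle_informative (exists _ : Riemann_integrable g a b, True) with
  | left H => RiemannInt (proj1_sig (constructive_indefinite_description _ H))
  | right _ => 0
  end.

(* Integrand tanh(xi/(2 tau)) / xi, with its continuous value 1/(2 tau) at xi = 0
   (a single point, irrelevant for the integral). *)
Definition integrand (tau xi : R) : R :=
  if Req_EM_T xi 0 then / (2 * tau) else tanh (xi / (2 * tau)) / xi.

Definition fT (xim mu tau : R) : R :=
  2 * tau * ln (cosh (xim / (2 * tau)) / cosh (mu / (2 * tau)))
  + mu * Rint (integrand tau) 0 mu.

(* With a = 1/(2 tau), L = ln o cosh and I(x) = int_0^x tanh u / u du, the
   substitution xi = u / a gives f = 2 tau (L(xi_m a) - L(mu a)) + mu I(mu a).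
   Hence df/dtau = 2 (L(xi_m a) - L(mu a) - xi_m a tanh(xi_m a)), negative since
   L(y) <= y tanh y and L(mu a) > 0, while df/dmu = I(mu a) > 0.  The bounds
   mu tanh(1) ln(mu a) <= mu I(mu a) <= f <= (xi_m^2 + mu^2) a give both limits,
   and a strictly decreasing continuous map of (0, oo) with these limits takes
   every positive value exactly once. *)
From Stdlib Require Import Reals Lra ClassicalEpsilon.
From Coquelicot Require Import Coquelicot.
Open Scope R_scope.

Lemma le_of_deriv_nonneg f f' a b : a <= b ->
  (forall c, a <= c <= b -> derivable_pt_lim f c (f' c)) ->
  (forall c, a < c < b -> 0 <= f' c) -> f a <= f b.
Proof.
  intros Hab Hd Hpos. destruct (Req_dec a b) as [->|Hne]; [lra|].
  destruct (MVT_cor2 f f' a b) as [c [E Hc]]; [lra|exact Hd|].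
  pose proof (Hpos c Hc). nra.
Qed.

Lemma lt_of_deriv_pos f f' a b : a < b ->
  (forall c, a <= c <= b -> derivable_pt_lim f c (f' c)) ->
  (forall c, a < c < b -> 0 < f' c) -> f a < f b.
Proof.
  intros Hab Hd Hpos.
  destruct (MVT_cor2 f f' a b) as [c [E Hc]]; [lra|exact Hd|].
  pose proof (Hpos c Hc). nra.
Qed.

Lemma decreasing_onto_pos (g : R -> R) :
  (forall t, 0 < t -> continuity_pt g t) ->
  (forall s t, 0 < s -> s < t -> g t < g s) ->
  (forall M, exists delta, 0 < delta /\ forall t, 0 < t < delta -> M < g t) ->
  (forall eps, 0 < eps -> exists N, forall t, N < t -> Rabs (g t) < eps) ->
  forall c, 0 < c -> exists! t, 0 < t /\ c = g t.
Proof.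
  intros Hcont Hdecr Hlim0 Hliminf c Hc.
  destruct (Hlim0 c) as [delta [Hdelta Hsmall]].
  destruct (Hliminf c Hc) as [N Hlarge].
  set (t1 := delta / 2). set (t2 := Rmax (N + 1) (t1 + 1)).
  assert (Ht1 : 0 < t1) by (unfold t1; lra).
  assert (Ht12 : N < t2 /\ t1 < t2).
  { pose proof (Rmax_l (N + 1) (t1 + 1)); pose proof (Rmax_r (N + 1) (t1 + 1)).
    unfold t2; lra. }
  assert (G1 : c < g t1) by (apply Hsmall; unfold t1; lra).
  assert (G2 : g t2 < c).
  { pose proof (Hlarge t2 (proj1 Ht12)); pose proof (Rle_abs (g t2)); lra. }
  destruct (Ranalysis5.IVT_interv (fun t => c - g t) t1 t2) as [t [Ht Et]];
    [|lra|lra|lra|].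
  { intros a Ha. apply continuity_pt_minus; [apply continuity_pt_const; now intros|].
    apply Hcont; lra. }
  exists t. split; [split; lra|].
  intros t' [Ht' E']. destruct (Rtotal_order t t') as [Hlt|[Heq|Hgt]]; [|exact Heq|].
  - pose proof (Hdecr t t' ltac:(lra) Hlt). lra.
  - pose proof (Hdecr t' t Ht' Hgt). lra.
Qed.

Lemma cosh_pos x : 0 < cosh x.
Proof. unfold cosh. pose proof (exp_pos x); pose proof (exp_pos (- x)). lra. Qed.

Lemma cosh2_sinh2 x : cosh x * cosh x - sinh x * sinh x = 1.
Proof.
  unfold cosh, sinh.
  assert (E : exp x * exp (- x) = 1) by (rewrite <- exp_plus, Rplus_opp_r; apply exp_0).
  nra.
Qed.

Lemma cosh_ge_1 x : 1 <= cosh x.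
Proof. pose proof (cosh2_sinh2 x); pose proof (cosh_pos x). nra. Qed.

Lemma sinh_pos x : 0 < x -> 0 < sinh x.
Proof. intro Hx. rewrite <- sinh_0. now apply sinh_lt. Qed.

Lemma cosh_gt_1 x : 0 < x -> 1 < cosh x.
Proof.
  intro Hx. pose proof (cosh2_sinh2 x); pose proof (cosh_pos x); pose proof (sinh_pos x Hx).
  nra.
Qed.

Lemma tanh_0 : tanh 0 = 0.
Proof. unfold tanh. rewrite sinh_0. apply Rdiv_0_l. Qed.

Lemma tanh_pos x : 0 < x -> 0 < tanh x.
Proof. intro Hx. apply Rdiv_lt_0_compat; [apply sinh_pos, Hx|apply cosh_pos]. Qed.

Lemma derivable_pt_lim_tanh y : derivable_pt_lim tanh y (/ (cosh y * cosh y)).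
Proof.
  change tanh with (div_fct sinh cosh).
  replace (/ (cosh y * cosh y))
    with ((cosh y * cosh y - sinh y * sinh y) / (cosh y)²)
    by (rewrite cosh2_sinh2; unfold Rsqr, Rdiv; ring).
  apply derivable_pt_lim_div;
    [apply derivable_pt_lim_sinh|apply derivable_pt_lim_cosh|apply Rgt_not_eq, cosh_pos].
Qed.

Lemma tanh_le x y : x <= y -> tanh x <= tanh y.
Proof.
  intro Hxy. apply (le_of_deriv_nonneg tanh (fun c => / (cosh c * cosh c)) x y Hxy).
  - intros; apply derivable_pt_lim_tanh.
  - intros c _. pose proof (cosh_pos c). left; apply Rinv_0_lt_compat; nra.
Qed.

Lemma tanh_le_id y : 0 <= y -> tanh y <= y.
Proof.
  intro Hy.
  enough (0 - tanh 0 <= y - tanh y) by (rewrite tanh_0 in *; lra).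
  apply (le_of_deriv_nonneg (fun x => x - tanh x) (fun x => 1 - / (cosh x * cosh x)) 0 y Hy).
  - intros c _. apply derivable_pt_lim_minus;
      [apply derivable_pt_lim_id|apply derivable_pt_lim_tanh].
  - intros c _. pose proof (cosh_ge_1 c).
    assert (/ (cosh c * cosh c) <= 1) by (rewrite <- Rinv_1; apply Rinv_le_contravar; nra).
    lra.
Qed.

Definition lncosh (y : R) : R := ln (cosh y).

Lemma derivable_pt_lim_lncosh y : derivable_pt_lim lncosh y (tanh y).
Proof.
  replace (tanh y) with (/ cosh y * sinh y) by (unfold tanh, Rdiv; ring).
  apply (derivable_pt_lim_comp cosh ln);
    [apply derivable_pt_lim_cosh|apply derivable_pt_lim_ln, cosh_pos].
Qed.

Lemma lncosh_0 : lncosh 0 = 0.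
Proof. unfold lncosh. rewrite cosh_0. apply ln_1. Qed.

Lemma lncosh_pos x : 0 < x -> 0 < lncosh x.
Proof.
  intro Hx. unfold lncosh. rewrite <- ln_1.
  apply ln_increasing; [lra|apply cosh_gt_1, Hx].
Qed.

Lemma lncosh_le x y : 0 <= x <= y -> lncosh x <= lncosh y.
Proof.
  intros [Hx Hxy]. apply (le_of_deriv_nonneg lncosh tanh x y Hxy).
  - intros; apply derivable_pt_lim_lncosh.
  - intros c Hc. rewrite <- tanh_0. apply tanh_le. lra.
Qed.

Lemma lncosh_le_mul_tanh y : 0 <= y -> lncosh y <= y * tanh y.
Proof.
  intro Hy.
  enough (0 * tanh 0 - lncosh 0 <= y * tanh y - lncosh y) by (rewrite lncosh_0 in *; lra).
  apply (le_of_deriv_nonneg (fun x => x * tanh x - lncosh x)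
           (fun x => (1 * tanh x + x * / (cosh x * cosh x)) - tanh x) 0 y Hy).
  - intros c _. apply derivable_pt_lim_minus; [|apply derivable_pt_lim_lncosh].
    apply (derivable_pt_lim_mult id tanh);
      [apply derivable_pt_lim_id|apply derivable_pt_lim_tanh].
  - intros c Hc. pose proof (cosh_pos c).
    assert (0 <= / (cosh c * cosh c)) by (left; apply Rinv_0_lt_compat; nra). nra.
Qed.

Lemma lncosh_le_sqr y : 0 <= y -> lncosh y <= y * y.
Proof. intro Hy. pose proof (lncosh_le_mul_tanh y Hy); pose proof (tanh_le_id y Hy). nra. Qed.

Definition tanhc (u : R) : R := if Req_EM_T u 0 then 1 else tanh u / u.

Lemma tanhc_eq u : u <> 0 -> tanhc u = tanh u / u.
Proof. intro Hu. unfold tanhc. now destruct (Req_EM_T u 0). Qed.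

Lemma tanhc_pos u : 0 < u -> 0 < tanhc u.
Proof. intro Hu. rewrite tanhc_eq by lra. apply Rdiv_lt_0_compat; [apply tanh_pos|]; lra. Qed.

Lemma tanhc_le_1 u : 0 <= u -> tanhc u <= 1.
Proof.
  intro Hu. unfold tanhc. destruct (Req_EM_T u 0); [lra|].
  apply Rcomplements.Rle_div_l; [lra|]. pose proof (tanh_le_id u Hu). lra.
Qed.

Lemma continuity_pt_tanhc u : continuity_pt tanhc u.
Proof.
  destruct (Req_dec u 0) as [->|Hu].
  - (* continuity at 0 is the statement tanh'(0) = 1 *)
    intros eps Heps. destruct (derivable_pt_lim_tanh 0 eps Heps) as [d Hd].
    exists d; split; [apply cond_pos|]. intros x [[_ Hx] Hdx].
    simpl in *. unfold R_dist in *. rewrite Rminus_0_r in Hdx.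
    specialize (Hd x (not_eq_sym Hx) Hdx).
    rewrite Rplus_0_l, tanh_0, cosh_0, Rminus_0_r, Rmult_1_l, Rinv_1 in Hd.
    rewrite tanhc_eq by congruence. unfold tanhc. now destruct (Req_EM_T 0 0).
  - apply (continuity_pt_locally_ext (fun x => tanh x / x) tanhc (Rabs u)).
    + now apply Rabs_pos_lt.
    + intros y Hy. rewrite tanhc_eq; [reflexivity|]. intros ->.
      unfold Rdist in Hy. rewrite Rminus_0_l, Rabs_Ropp in Hy. lra.
    + apply derivable_continuous_pt.
      exists ((/ (cosh u * cosh u) * u - 1 * tanh u) / u²).
      change (fun x => tanh x / x) with (div_fct tanh id).
      apply derivable_pt_lim_div; [apply derivable_pt_lim_tanh|apply derivable_pt_lim_id|exact Hu].
Qed.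

Lemma ex_RInt_tanhc a b : ex_RInt tanhc a b.
Proof.
  apply (@ex_RInt_continuous R_CompleteNormedModule).
  intros; apply continuity_pt_filterlim, continuity_pt_tanhc.
Qed.

Definition Itanhc (x : R) : R := RInt tanhc 0 x.

Lemma derivable_pt_lim_Itanhc x : derivable_pt_lim Itanhc x (tanhc x).
Proof.
  apply is_derive_Reals, (is_derive_RInt tanhc Itanhc 0 x).
  - apply filter_forall. intro b. apply (@RInt_correct R_CompleteNormedModule), ex_RInt_tanhc.
  - apply continuity_pt_filterlim, continuity_pt_tanhc.
Qed.

Lemma Itanhc_0 : Itanhc 0 = 0.
Proof. unfold Itanhc. now rewrite RInt_point. Qed.

Lemma Itanhc_pos x : 0 < x -> 0 < Itanhc x.
Proof.
  intro Hx. rewrite <- Itanhc_0. apply (lt_of_deriv_pos Itanhc tanhc 0 x Hx).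
  - intros; apply derivable_pt_lim_Itanhc.
  - intros; apply tanhc_pos; lra.
Qed.

Lemma Itanhc_le x : 0 <= x -> Itanhc x <= x.
Proof.
  intro Hx. enough (0 - Itanhc 0 <= x - Itanhc x) by (rewrite Itanhc_0 in *; lra).
  apply (le_of_deriv_nonneg (fun y => y - Itanhc y) (fun y => 1 - tanhc y) 0 x Hx).
  - intros; apply derivable_pt_lim_minus;
      [apply derivable_pt_lim_id|apply derivable_pt_lim_Itanhc].
  - intros c Hc. pose proof (tanhc_le_1 c). lra.
Qed.

(* tanh is increasing, so tanhc u >= tanh 1 / u for u >= 1 *)
Lemma Itanhc_ge_ln x : 1 <= x -> tanh 1 * ln x <= Itanhc x.
Proof.
  intro Hx. pose proof (Itanhc_pos 1 ltac:(lra)).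
  enough (Itanhc 1 - tanh 1 * ln 1 <= Itanhc x - tanh 1 * ln x) by (rewrite ln_1 in *; lra).
  apply (le_of_deriv_nonneg (fun y => Itanhc y - tanh 1 * ln y)
           (fun y => tanhc y - tanh 1 * / y) 1 x Hx).
  - intros c Hc. apply derivable_pt_lim_minus; [apply derivable_pt_lim_Itanhc|].
    apply derivable_pt_lim_scal, derivable_pt_lim_ln. lra.
  - intros c Hc. rewrite tanhc_eq by lra. pose proof (tanh_le 1 c ltac:(lra)).
    replace (tanh c / c - tanh 1 * / c) with ((tanh c - tanh 1) / c) by (field; lra).
    apply Rcomplements.Rdiv_le_0_compat; lra.
Qed.

Lemma Itanhc_unbounded M : exists X, 0 < X /\ forall x, X < x -> M < Itanhc x.
Proof.
  pose proof (tanh_pos 1 ltac:(lra)) as Ht1.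
  set (K := Rabs M / tanh 1).
  assert (HK : 0 <= K) by (apply Rcomplements.Rdiv_le_0_compat; [apply Rabs_pos|lra]).
  assert (HX : 1 <= exp K) by (pose proof (exp_ineq1_le K); lra).
  exists (exp K). split; [apply exp_pos|]. intros x Hx.
  assert (K < ln x) by (rewrite <- (ln_exp K); apply ln_increasing; [apply exp_pos|exact Hx]).
  assert (E : tanh 1 * K = Rabs M) by (unfold K; field; lra).
  pose proof (Itanhc_ge_ln x ltac:(lra)). pose proof (Rle_abs M). nra.
Qed.

Lemma Rint_RInt g a b : ex_RInt g a b -> Rint g a b = RInt g a b.
Proof.
  intro Hg. unfold Rint. destruct excluded_middle_informative as [e|n].
  - destruct (constructive_indefinite_description _ e) as [pr ?]. symmetry. apply RInt_Reals.
  - exfalso. apply n. now exists (ex_RInt_Reals_0 g a b Hg).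
Qed.

Lemma Rint_integrand t m : t <> 0 -> Rint (integrand t) 0 m = Itanhc (m * / (2 * t)).
Proof.
  intro Ht. set (a := / (2 * t)).
  assert (Ha : a <> 0) by (unfold a; apply Rinv_neq_0_compat; lra).
  assert (E : forall x, scal a (tanhc (a * x + 0)) = integrand t x).
  { intro x. unfold scal; simpl. unfold mult; simpl. unfold integrand, tanhc.
    rewrite Rplus_0_r. destruct (Req_EM_T x 0) as [->|Hx].
    - rewrite Rmult_0_r. destruct (Req_EM_T 0 0); [unfold a; ring|congruence].
    - destruct (Req_EM_T (a * x) 0) as [Ea|_].
      + apply Rmult_integral in Ea. tauto.
      + replace (x / (2 * t)) with (a * x) by (unfold a; field; lra).
        field. split; [exact Hx|exact Ha]. }
  assert (Ex : ex_RInt tanhc (a * 0 + 0) (a * m + 0)) by apply ex_RInt_tanhc.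
  rewrite Rint_RInt
    by (eapply ex_RInt_ext; [|exact (ex_RInt_comp_lin tanhc a 0 0 m Ex)]; intros; apply E).
  rewrite <- (RInt_ext _ _ 0 m (fun x _ => E x)).
  transitivity (RInt tanhc (a * 0 + 0) (a * m + 0)); [exact (RInt_comp_lin tanhc a 0 0 m Ex)|].
  unfold Itanhc. f_equal; ring.
Qed.

Lemma fT_eq xim m t : t <> 0 ->
  fT xim m t =
  2 * t * (lncosh (xim * / (2 * t)) - lncosh (m * / (2 * t))) + m * Itanhc (m * / (2 * t)).
Proof.
  intro Ht. unfold fT. rewrite Rint_integrand by exact Ht. unfold lncosh.
  rewrite ln_div by apply cosh_pos. reflexivity.
Qed.

Lemma ex_derive_lncosh y : ex_derive lncosh y.
Proof. exists (tanh y). apply is_derive_Reals, derivable_pt_lim_lncosh. Qed.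

Lemma Derive_lncosh y : Derive lncosh y = tanh y.
Proof. apply is_derive_unique, is_derive_Reals, derivable_pt_lim_lncosh. Qed.

Lemma ex_derive_Itanhc y : ex_derive Itanhc y.
Proof. exists (tanhc y). apply is_derive_Reals, derivable_pt_lim_Itanhc. Qed.

Lemma Derive_Itanhc y : Derive Itanhc y = tanhc y.
Proof. apply is_derive_unique, is_derive_Reals, derivable_pt_lim_Itanhc. Qed.

Definition dfT_dtau xim mu tau : R :=
  let a := / (2 * tau) in
  2 * (lncosh (xim * a) - lncosh (mu * a) - xim * a * tanh (xim * a)).

Lemma derivable_pt_lim_fT_tau xim mu tau : 0 < mu -> 0 < tau ->
  derivable_pt_lim (fun t => fT xim mu t) tau (dfT_dtau xim mu tau).
Proof.
  intros Hmu Htau. apply is_derive_Reals.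
  apply (is_derive_ext_loc (fun t => 2 * t * (lncosh (xim * / (2 * t))
            - lncosh (mu * / (2 * t))) + mu * Itanhc (mu * / (2 * t)))).
  { apply (filter_imp (fun u : R => 0 < u)); [|exact (open_gt 0 tau Htau)].
    intros y Hy. symmetry. apply fT_eq. simpl in Hy. lra. }
  auto_derive.
  { repeat split; try apply ex_derive_lncosh; try apply ex_derive_Itanhc; lra. }
  rewrite !Derive_lncosh, Derive_Itanhc, tanhc_eq.
  - unfold dfT_dtau. field. lra.
  - apply Rmult_integral_contrapositive_currified; [lra|apply Rinv_neq_0_compat; lra].
Qed.

Lemma dfT_dtau_neg xim mu tau : 0 < mu -> mu <= xim -> 0 < tau -> dfT_dtau xim mu tau < 0.
Proof.
  intros Hmu Hm Htau. unfold dfT_dtau. set (a := / (2 * tau)).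
  assert (0 < a) by (apply Rinv_0_lt_compat; lra).
  pose proof (lncosh_le_mul_tanh (xim * a) ltac:(nra)).
  pose proof (lncosh_pos (mu * a) ltac:(nra)). lra.
Qed.

Lemma derivable_pt_lim_fT_mu xim mu tau : 0 < mu -> 0 < tau ->
  derivable_pt_lim (fun m => fT xim m tau) mu (Itanhc (mu * / (2 * tau))).
Proof.
  intros Hmu Htau. apply is_derive_Reals.
  apply (is_derive_ext (fun m => 2 * tau * (lncosh (xim * / (2 * tau))
            - lncosh (m * / (2 * tau))) + m * Itanhc (m * / (2 * tau)))).
  { intro y. symmetry. apply fT_eq. lra. }
  auto_derive.
  { repeat split; try apply ex_derive_lncosh; try apply ex_derive_Itanhc; lra. }
  rewrite !Derive_lncosh, Derive_Itanhc, tanhc_eq.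
  - field. lra.
  - apply Rmult_integral_contrapositive_currified; [lra|apply Rinv_neq_0_compat; lra].
Qed.

Lemma fT_decreasing xim mu s t : 0 < mu -> mu <= xim -> 0 < s -> s < t ->
  fT xim mu t < fT xim mu s.
Proof.
  intros Hmu Hm Hs Hst.
  enough (- fT xim mu s < - fT xim mu t) by lra.
  apply (lt_of_deriv_pos (fun t => - fT xim mu t) (fun t => - dfT_dtau xim mu t) s t Hst).
  - intros c Hc. apply derivable_pt_lim_opp, derivable_pt_lim_fT_tau; lra.
  - intros c Hc. pose proof (dfT_dtau_neg xim mu c Hmu Hm ltac:(lra)). lra.
Qed.

Lemma fT_ge xim mu tau : 0 < mu -> mu <= xim -> 0 < tau ->
  mu * Itanhc (mu * / (2 * tau)) <= fT xim mu tau.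
Proof.
  intros Hmu Hm Htau. rewrite fT_eq by lra. set (a := / (2 * tau)).
  assert (0 < a) by (apply Rinv_0_lt_compat; lra).
  pose proof (lncosh_le (mu * a) (xim * a) ltac:(split; nra)). nra.
Qed.

Lemma fT_le xim mu tau : 0 < mu -> mu <= xim -> 0 < tau ->
  fT xim mu tau <= (xim * xim + mu * mu) * / (2 * tau).
Proof.
  intros Hmu Hm Htau. rewrite fT_eq by lra. set (a := / (2 * tau)).
  assert (0 < a) by (apply Rinv_0_lt_compat; lra).
  assert (E : 2 * tau * a = 1) by (unfold a; field; lra).
  pose proof (lncosh_le_sqr (xim * a) ltac:(nra)).
  pose proof (lncosh_pos (mu * a) ltac:(nra)).
  pose proof (Itanhc_le (mu * a) ltac:(nra)).
  assert (E' : 2 * tau * (xim * a * (xim * a)) = xim * xim * a)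
    by (transitivity (xim * xim * a * (2 * tau * a)); [ring|rewrite E; ring]).
  nra.
Qed.

Lemma fT_lim_0 xim mu : 0 < mu -> mu <= xim ->
  forall M, exists delta, 0 < delta /\ forall tau, 0 < tau < delta -> M < fT xim mu tau.
Proof.
  intros Hmu Hm M. destruct (Itanhc_unbounded (M / mu)) as [X [HX HI]].
  exists (mu / (2 * X)). split; [apply Rdiv_lt_0_compat; lra|].
  intros tau [Htau Hsmall].
  assert (Ha : X < mu * / (2 * tau)).
  { apply (Rmult_lt_reg_r (2 * tau)); [lra|].
    replace (mu * / (2 * tau) * (2 * tau)) with mu by (field; lra).
    apply (Rmult_lt_compat_l (2 * X)) in Hsmall; [|lra].
    replace (2 * X * (mu / (2 * X))) with mu in Hsmall by (field; lra). lra. }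
  pose proof (HI _ Ha). pose proof (fT_ge xim mu tau Hmu Hm Htau).
  assert (E : mu * (M / mu) = M) by (field; lra). nra.
Qed.

Lemma fT_lim_infty xim mu : 0 < mu -> mu <= xim ->
  forall eps, 0 < eps -> exists N, forall tau, N < tau -> Rabs (fT xim mu tau) < eps.
Proof.
  intros Hmu Hm eps Heps. set (C := xim * xim + mu * mu).
  assert (HC : 0 < C) by (unfold C; nra).
  exists (C / eps). intros tau Htau.
  assert (HN : 0 < C / eps) by (apply Rdiv_lt_0_compat; lra).
  pose proof (fT_ge xim mu tau Hmu Hm ltac:(lra)).
  pose proof (Itanhc_pos (mu * / (2 * tau))
                ltac:(apply Rmult_lt_0_compat; [lra|apply Rinv_0_lt_compat; lra])).
  pose proof (fT_le xim mu tau Hmu Hm ltac:(lra)) as Hle. fold C in Hle.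
  rewrite Rabs_pos_eq by nra.
  enough (C * / (2 * tau) < eps) by lra.
  apply (Rmult_lt_reg_r (2 * tau)); [lra|].
  replace (C * / (2 * tau) * (2 * tau)) with C by (field; lra).
  apply (Rmult_lt_compat_l eps) in Htau; [|lra].
  replace (eps * (C / eps)) with C in Htau by (field; lra). lra.
Qed.

Theorem mainTheorem8 (xim mu : R) (Hxim : 0 < xim) (Hmu0 : 0 < mu) (Hmu1 : mu <= xim) :
  (forall tau, 0 < tau ->
     exists l, derivable_pt_lim (fun t => fT xim mu t) tau l /\ l < 0) /\
  (forall tau, 0 < tau ->
     exists l, derivable_pt_lim (fun m => fT xim m tau) mu l /\ 0 < l) /\
  (forall M, exists delta, 0 < delta /\
     forall tau, 0 < tau < delta -> M < fT xim mu tau) /\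
  (forall eps, 0 < eps -> exists N,
     forall tau, N < tau -> Rabs (fT xim mu tau) < eps) /\
  (forall lambda, 0 < lambda ->
     exists! tau, 0 < tau /\ xim / lambda = fT xim mu tau).
Proof.
  split; [|split; [|split; [|split]]].
  - intros tau Htau. exists (dfT_dtau xim mu tau).
    split; [apply derivable_pt_lim_fT_tau|apply dfT_dtau_neg]; lra.
  - intros tau Htau. exists (Itanhc (mu * / (2 * tau))).
    split; [apply derivable_pt_lim_fT_mu; lra|].
    apply Itanhc_pos, Rmult_lt_0_compat; [lra|apply Rinv_0_lt_compat; lra].
  - now apply fT_lim_0.
  - now apply fT_lim_infty.
  - intros lambda Hlambda. apply decreasing_onto_pos.
    + intros t Ht. apply derivable_continuous_pt.
      exists (dfT_dtau xim mu t). apply derivable_pt_lim_fT_tau; lra.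
    + intros s t Hs Hst. now apply fT_decreasing.
    + now apply fT_lim_0.
    + now apply fT_lim_infty.
    + apply Rdiv_lt_0_compat; lra.
Qed.
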